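(* Consider the tabular parametrization $\theta=\pi\in\Delta_{\mathcal A}^{\mathcal S}$, $\lambda(\theta)=\Lambda(\pi)$, and suppose $\xi_s>0$ for all $s$. Let $F$ be concave on an open neighbourhood of $\mathcal L$ and suppose $R(\pi):=F(\Lambda(\pi))$ is differentiable on $\Delta_{\mathcal A}^{\mathcal S}$ with $L$-Lipschitz gradient $\nabla_\pi R$. Let $\pi^*$ be a global maximizer of $R$ over $\Delta_{\mathcal A}^{\mathcal S}$, $\pi^0\in\Delta_{\mathcal A}^{\mathcal S}$, and $\pi^{k+1}=\mathrm{Proj}_{\Delta_{\mathcal A}^{\mathcal S}}\{\pi^k+\frac1L\nabla_\pi R(\pi^k)\}$. Then for all $k\ge1$, $$R(\pi^* )-R(\pi^k)\le\frac{20L|\mathcal S|}{(1-\gamma)^2(k+1)}\Big\|d^{\pi^*}_\xi/\xi\Big\|_\infty^2.$$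
   Context: Finite MDP with states $\mathcal S$, actions $\mathcal A$, transition matrices $P_a$, initial distribution $\xi$, discount $\gamma\in(0,1)$. $\Delta_{\mathcal A}^{\mathcal S}$ is the set of tabular policies ($\pi(\cdot|s)$ a probability distribution on $\mathcal A$ for each $s$). $\Lambda_{sa}(\pi)=\sum_{t\ge0}\gamma^t\mathbb P(s_t=s,a_t=a\mid\pi,s_0\sim\xi)$ is the occupancy measure, and $\mathcal L=\{\lambda\ge0:\sum_a(I-\gamma P_a^\top)\lambda_a=\xi\}=\Lambda(\Delta_{\mathcal A}^{\mathcal S})$. The discounted state visitation distribution is $d^\pi_\xi(s)=(1-\gamma)\sum_{t\ge0}\gamma^t\mathbb P(s_t=s\mid\pi,s_0\sim\xi)$; $d^{\pi^*}_\xi/\xi$ is the componentwise ratio. $\mathrm{Proj}$ is Euclidean projection. *)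

From HB Require Import structures.
From mathcomp Require Import all_boot all_order all_algebra.
From mathcomp Require Import all_classical all_reals all_analysis.
Set Implicit Arguments. Unset Strict Implicit. Unset Printing Implicit Defensive.
Import Order.TTheory GRing.Theory Num.Theory.
Import numFieldNormedType.Exports.
Local Open Scope classical_set_scope.
Local Open Scope ring_scope.

(* A (tabular) policy, and more generally
   any point of R^{S x A}, is a matrix 'M[R]_(nS, nA), entry (s, a) = pi(a|s).
   Transition kernel: P a s s' = P(s_{t+1} = s' | s_t = s, a_t = a). *)

Section MDP.
Variables (R : realType) (nS nA : nat).
Variable P : 'I_nA -> 'M[R]_nS.
Variable xi : 'rV[R]_nS.
Variable gamma : R.

Definition policies : set 'M[R]_(nS, nA) :=
  [set pi | (forall s a, 0 <= pi s a) /\ (forall s, \sum_a pi s a = 1)].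

Fixpoint state_dist (pi : 'M[R]_(nS, nA)) (t : nat) : 'rV[R]_nS :=
  match t with
  | 0%N => xi
  | t'.+1 => \row_s' \sum_s \sum_a
                (state_dist pi t' 0 s * pi s a * P a s s')
  end.

Definition rseries (u : nat -> R) : R := limn (fun n => \sum_(0 <= t < n) u t).

Definition occupancy (pi : 'M[R]_(nS, nA)) : 'M[R]_(nS, nA) :=
  \matrix_(s, a) rseries (fun t => gamma ^+ t * (state_dist pi t 0 s * pi s a)).

Definition dvisit (pi : 'M[R]_(nS, nA)) (s : 'I_nS) : R :=
  (1 - gamma) * rseries (fun t => gamma ^+ t * state_dist pi t 0 s).

Definition occ_polytope : set 'M[R]_(nS, nA) :=
  [set lam | (forall s a, 0 <= lam s a) /\
     (forall s', \sum_a (lam s' a - gamma * \sum_s P a s s' * lam s a) = xi 0 s')].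

End MDP.

Definition frob_norm (R : realType) m n (x : 'M[R]_(m, n)) : R :=
  Num.sqrt (\sum_i \sum_j x i j ^+ 2).

Definition grad (R : realType) m n (f : 'M[R]_(m, n) -> R^o) (x : 'M[R]_(m, n))
  : 'M[R]_(m, n) := \matrix_(i, j) ('d f x) (delta_mx i j : 'M[R]_(m, n)).

Definition sup_norm (R : realType) n (v : 'I_n -> R) : R :=
  \big[Num.max/0]_i `|v i|.

From HB Require Import structures.
From mathcomp Require Import all_boot all_order all_algebra.
From mathcomp Require Import all_classical all_reals all_analysis.
From mathcomp.algebra_tactics Require Import ring lra.
Import Order.TTheory GRing.Theory Num.Theory.
Import numFieldNormedType.Exports.
Local Open Scope classical_set_scope.
Local Open Scope ring_scope.
Set Implicit Arguments. Unset Strict Implicit. Unset Printing Implicit Defensive.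

(* Write R(pi) = F(Lambda(pi)) and d_k = R(pistar) - R(pi^k).  The proof combines
   three independent ingredients.
   1. Smooth optimization on a convex set D of matrices, with the Frobenius
      inner product: an L-Lipschitz gradient gives the quadratic bound
      |f y - f x - <grad f x, y - x>| <= L/2 |y - x|^2 (from the mean value
      theorem), and with the variational inequality of the projection this
      shows that a step x+ = Proj_D (x + grad f x / L) satisfies
      f y <= f x+ + L |y - x|^2 for every y in D.
   2. Occupancy measures: the discounted state occupancy mu_pi is the unique
      solution of the Bellman flow equation and Lambda(pi)_sa = mu_pi(s) pi(a|s),
      so al Lambda(pistar) + (1 - al) Lambda(pi) is the occupancy measure of an
      explicit mixture policy, at squared distance <= 2|S| (al Mb)^2 from pi,
      where Mb = ||d^{pistar}/xi||_oo / (1 - gamma) bounds mu_{pistar} / xi.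
   3. Concavity of F along that mixture, compared with the step from pi^k,
      gives d_{k+1} <= (1 - al) d_k + 2 L |S| Mb^2 al^2 for all al in [0,1],
      and this recursion forces d_k <= 8 L |S| Mb^2 / (k + 1). *)

Section FrobeniusInnerProduct.
Variables (R : realType) (m n : nat).
Implicit Types (a b c : 'M[R]_(m, n)) (t e : R).

Definition ip a b : R := \sum_i \sum_j a i j * b i j.
Definition sqn a : R := ip a a.

Lemma ipC a b : ip a b = ip b a.
Proof. by apply: eq_bigr => i _; apply: eq_bigr => j _; rewrite mulrC. Qed.

Lemma ipDl a b c : ip (a + b) c = ip a c + ip b c.
Proof.
rewrite /ip -big_split; apply: eq_bigr => i _.
by rewrite -big_split; apply: eq_bigr => j _; rewrite mxE mulrDl.
Qed.

Lemma ipNl a b : ip (- a) b = - ip a b.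
Proof.
rewrite /ip -sumrN; apply: eq_bigr => i _.
by rewrite -sumrN; apply: eq_bigr => j _; rewrite mxE mulNr.
Qed.

Lemma ipZl t a b : ip (t *: a) b = t * ip a b.
Proof.
rewrite /ip mulr_sumr; apply: eq_bigr => i _.
by rewrite mulr_sumr; apply: eq_bigr => j _; rewrite mxE mulrA.
Qed.

Lemma ipBl a b c : ip (a - b) c = ip a c - ip b c.
Proof. by rewrite ipDl ipNl. Qed.

Lemma ipDr a b c : ip c (a + b) = ip c a + ip c b.
Proof. by rewrite ipC ipDl ipC [ip b c]ipC. Qed.

Lemma ipBr a b c : ip c (a - b) = ip c a - ip c b.
Proof. by rewrite ipC ipBl ipC [ip b c]ipC. Qed.

Lemma ipZr t a b : ip a (t *: b) = t * ip a b.
Proof. by rewrite ipC ipZl ipC. Qed.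

Lemma sqn_ge0 a : 0 <= sqn a.
Proof. by apply: sumr_ge0 => i _; apply: sumr_ge0 => j _; rewrite -expr2 sqr_ge0. Qed.

Lemma sqnZ t a : sqn (t *: a) = t ^+ 2 * sqn a.
Proof. by rewrite /sqn ipZl ipZr mulrA -expr2. Qed.

Lemma sqnN a : sqn (- a) = sqn a.
Proof. by rewrite -scaleN1r sqnZ sqrrN expr1n mul1r. Qed.

Lemma sqnDZ a b t : sqn (a + t *: b) = sqn a + 2 * t * ip a b + t ^+ 2 * sqn b.
Proof. by rewrite /sqn !ipDl !ipDr !ipZl !ipZr [ip b a]ipC; ring. Qed.

Lemma ip_young a b : ip a b <= (sqn a + sqn b) / 2.
Proof.
rewrite /sqn /ip -big_split /= mulr_suml; apply: ler_sum => i _.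
rewrite -big_split /= mulr_suml; apply: ler_sum => j _.
by have := sqr_ge0 (a i j - b i j); nra.
Qed.

Lemma ip_le_sqn a b e : 0 < e -> sqn a <= e ^+ 2 * sqn b -> ip a b <= e * sqn b.
Proof.
move=> e0 hab; rewrite -(ler_pM2l e0) mulrA -expr2.
by have := ip_young a (e *: b); rewrite ipZr sqnZ; lra.
Qed.

Lemma ip_abs_le_sqn a b e :
  0 < e -> sqn a <= e ^+ 2 * sqn b -> `|ip a b| <= e * sqn b.
Proof.
by move=> e0 hab; rewrite ler_norml lerNl -ipNl !ip_le_sqn // sqnN.
Qed.

Lemma frob_normE a : frob_norm a ^+ 2 = sqn a.
Proof.
rewrite /frob_norm sqr_sqrtr; last first.
  by apply: sumr_ge0 => i _; apply: sumr_ge0 => j _; rewrite sqr_ge0.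
by apply: eq_bigr => i _; apply: eq_bigr => j _; rewrite expr2.
Qed.

Lemma sqn_le_scale a b e :
  0 <= e -> frob_norm a <= e * frob_norm b -> sqn a <= e ^+ 2 * sqn b.
Proof.
move=> e0 h; rewrite -!frob_normE -exprMn ler_pXn2r // nnegrE ?sqrtr_ge0 //.
by rewrite mulr_ge0 ?sqrtr_ge0.
Qed.

Lemma sqn_le a b : frob_norm a <= frob_norm b -> sqn a <= sqn b.
Proof. by move=> h; rewrite -!frob_normE ler_pXn2r // nnegrE sqrtr_ge0. Qed.

End FrobeniusInnerProduct.

Lemma diff_ip (R : realType) m n (f : 'M[R]_(m, n) -> R^o) (a d : 'M[R]_(m, n)) :
  'd f a d = ip (grad f a) d.
Proof.
rewrite {1}(matrix_sum_delta d) linear_sum /ip; apply: eq_bigr => i _.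
rewrite linear_sum; apply: eq_bigr => j _.
by rewrite linearZ /= mxE mulrC.
Qed.

Lemma line_derive (R : realType) m n (f : 'M[R]_(m, n) -> R^o) (x d : 'M[R]_(m, n))
    (t : R) :
  differentiable f (x + t *: d) ->
  is_derive t 1 (fun s : R => f (x + s *: d)) (ip (grad f (x + t *: d)) d).
Proof.
move=> df.
have shiftE : (fun h : R => h^-1 *: (((fun s : R => f (x + s *: d)) \o shift t) (h *: 1)
                                    - f (x + t *: d)))
   = (fun h : R => h^-1 *: ((f \o shift (x + t *: d)) (h *: d) - f (x + t *: d))).
  apply: funext => h /=; congr (_ *: (f _ - _)).
  have -> : h%:A = h by rewrite /GRing.scale /= mulr1.
  by rewrite scalerDl addrCA addrA.
have dv : derivable (fun s : R => f (x + s *: d)) t 1.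
  by rewrite /derivable shiftE; exact: (diff_derivable df).
suff <- : 'D_1 (fun s : R => f (x + s *: d)) t = ip (grad f (x + t *: d)) d.
  exact: derivableP dv.
by rewrite /derive shiftE -/(derive f (x + t *: d) d) deriveE // diff_ip.
Qed.

(* A one-sided first-order bound from the mean value theorem: if the
   derivative of g exceeds g'(0) by at most M s on [0,1], then g 1 exceeds
   the linear prediction g 0 + g'(0) by at most M / 2. *)
Lemma first_order_upper (R : realType) (g dg : R -> R) (M : R) :
  (forall s : R, 0 <= s <= 1 -> is_derive s 1 g (dg s)) ->
  (forall s : R, 0 < s < 1 -> dg s - dg 0 <= M * s) ->
  g 1 - g 0 - dg 0 <= M / 2.
Proof.
move=> gd hM.
pose phi (s : R) : R := g s - (dg 0 * s + M / 2 * s ^+ 2).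
have phid (s : R) : 0 <= s <= 1 -> is_derive s 1 phi (dg s - (dg 0 + M * s)).
  move=> s01; apply: is_derive_eq.
    exact: (is_deriveB (gd s s01) (is_deriveD
      (is_deriveM (is_derive_cst (dg 0) s 1) (is_derive_id s 1))
      (is_deriveM (is_derive_cst (M / 2) s 1) (is_deriveX 2 (is_derive_id s 1))))).
  by rewrite /GRing.scale /=; field.
have [c /[!in_itv] /= /andP[c0 c1] phi10] : exists2 c, c \in `]0, 1[ &
    phi 1 - phi 0 = (dg c - (dg 0 + M * c)) * (1 - 0).
  apply: MVT => [|x /[!in_itv] /= /andP[x0 x1]|]; first exact: ltr01.
    by apply: phid; rewrite !ltW.
  apply: derivable_within_continuous => x /[!in_itv] /= x01.
  exact: (@ex_derive _ _ _ _ _ _ _ (phid x x01)).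
have := hM c; rewrite c0 c1 => /(_ isT).
move: phi10; rewrite /phi expr1n expr0n /= !mulr0 !mulr1 !addr0 subr0.
lra.
Qed.

Lemma first_order_bound (R : realType) (g dg : R -> R) (M : R) :
  (forall s : R, 0 <= s <= 1 -> is_derive s 1 g (dg s)) ->
  (forall s : R, 0 < s < 1 -> `|dg s - dg 0| <= M * s) ->
  `|g 1 - g 0 - dg 0| <= M / 2.
Proof.
move=> gd hM; rewrite ler_norml; apply/andP; split; last first.
  by apply: first_order_upper => // s /hM; apply: le_trans (ler_norm _).
have gdN (s : R) : 0 <= s <= 1 -> is_derive s 1 (fun x => - g x) (- dg s).
  by move/gd; exact: is_deriveN.
have hMN (s : R) : 0 < s < 1 -> - dg s - - dg 0 <= M * s.
  by move=> /hM; apply: le_trans; rewrite -opprD -normrN ler_norm.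
by have := first_order_upper gdN hMN; lra.
Qed.

Lemma nonneg_of_quadratic (R : realType) (p q : R) : 0 <= q ->
  (forall s, 0 < s <= 1 -> 0 <= 2 * s * p + s ^+ 2 * q) -> 0 <= p.
Proof.
move=> q0 h; rewrite leNgt; apply/negP => p0.
have d0 : 0 < q - p by lra.
set s := - p / (q - p).
have s0 : 0 < s by rewrite /s divr_gt0 // oppr_gt0.
have s1 : s <= 1 by rewrite /s ler_pdivrMr // mul1r; lra.
have := h s; rewrite s0 s1 => /(_ isT).
have : s * q <= - p by rewrite /s mulrAC ler_pdivrMr //; nra.
nra.
Qed.

Lemma projection_variational (R : realType) m n (xp z y : 'M[R]_(m, n)) :
  (forall s, 0 < s <= 1 -> frob_norm (xp - z) <= frob_norm ((xp + s *: (y - xp)) - z)) ->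
  0 <= ip (xp - z) (y - xp).
Proof.
move=> h; apply: (nonneg_of_quadratic (sqn_ge0 (y - xp))) => s hs.
have := sqn_le (h s hs).
by rewrite addrAC sqnDZ; lra.
Qed.

Section SmoothAscent.
Variables (R : realType) (m n : nat) (D : set 'M[R]_(m, n)).
Variables (f : 'M[R]_(m, n) -> R^o) (L : R).

Hypothesis D_segment :
  forall x y t, D x -> D y -> 0 <= t <= 1 -> D (x + t *: (y - x)).
Hypothesis L_gt0 : 0 < L.
Hypothesis f_diff : forall x, D x -> differentiable f x.
Hypothesis grad_lipschitz : forall x y, D x -> D y ->
  frob_norm (grad f x - grad f y) <= L * frob_norm (x - y).

Lemma quadratic_bound x y : D x -> D y ->
  `|f y - f x - ip (grad f x) (y - x)| <= L / 2 * sqn (y - x).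
Proof.
move=> Dx Dy; set d := y - x.
have lineD s : 0 <= s <= 1 -> D (x + s *: d) by exact: D_segment.
have end0 : x + 0 *: d = x by rewrite scale0r addr0.
have end1 : x + 1 *: d = y by rewrite scale1r addrC subrK.
rewrite mulrAC.
have := @first_order_bound R (fun s => f (x + s *: d))
  (fun s => ip (grad f (x + s *: d)) d) (L * sqn d).
rewrite end0 end1; apply.
  by move=> s /lineD /f_diff; exact: line_derive.
move=> s /andP[s0 s1]; rewrite -ipBl mulrAC; apply: ip_abs_le_sqn.
  by rewrite mulr_gt0.
have Ds : D (x + s *: d) by apply: lineD; rewrite !ltW.
have := sqn_le_scale (ltW L_gt0) (grad_lipschitz Ds Dx).
have -> : x + s *: d - x = s *: d by rewrite addrAC subrr add0r.
by rewrite sqnZ mulrA -exprMn.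
Qed.

Lemma projected_ascent_step x xp y : D x -> D xp -> D y ->
  (forall w, D w -> frob_norm (xp - (x + L^-1 *: grad f x))
                    <= frob_norm (w - (x + L^-1 *: grad f x))) ->
  f y <= f xp + L * sqn (y - x).
Proof.
move=> Dx Dxp Dy xp_proj.
have proj : 0 <= ip (xp - (x + L^-1 *: grad f x)) (y - xp).
  apply: projection_variational => s /andP[s0 s1]; apply: xp_proj.
  by apply: D_segment => //; rewrite (ltW s0) s1.
have qy := quadratic_bound Dx Dy; have qp := quadratic_bound Dx Dxp.
have young := ler_wpM2l (ltW L_gt0) (ip_young (xp - x) (y - x)).
move: proj.
have -> : xp - (x + L^-1 *: grad f x) = (xp - x) - L^-1 *: grad f x.
  by rewrite opprD addrA.
have -> : y - xp = (y - x) - (xp - x) by rewrite opprB addrA subrK.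
move: qy qp young; move: (y - x) (xp - x) => dy dp qy qp young.
rewrite ipBl !ipBr !ipZl -/(sqn dp) => proj.
have {}proj : ip (grad f x) dy - ip (grad f x) dp <= L * (ip dp dy - sqn dp).
  by rewrite -ler_pdivrMl //; lra.
move: qy qp; rewrite !ler_norml => /andP[_ qy] /andP[qp _].
lra.
Qed.

End SmoothAscent.

Lemma policies_segment (R : realType) nS nA (x y : 'M[R]_(nS, nA)) (t : R) :
  policies x -> policies y -> 0 <= t <= 1 -> policies (x + t *: (y - x)).
Proof.
move=> [x_ge0 x_sum1] [y_ge0 y_sum1] /andP[t0 t1]; split=> [s a|s].
  by rewrite !mxE; have := x_ge0 s a; have := y_ge0 s a; nra.
have -> : \sum_a (x + t *: (y - x)) s a = \sum_a x s a + t * (\sum_a y s a - \sum_a x s a).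
  rewrite -sumrB mulr_sumr -big_split; apply: eq_bigr => a _.
  by rewrite !mxE mulrBr.
by rewrite x_sum1 y_sum1 subrr mulr0 addr0.
Qed.

Lemma policy_le1 (R : realType) nS nA (pi : 'M[R]_(nS, nA)) s a :
  policies pi -> pi s a <= 1.
Proof.
case=> pi_ge0 pi_sum1; rewrite -(pi_sum1 s) (bigD1 a) //= lerDl.
by apply: sumr_ge0 => b _; exact: pi_ge0.
Qed.

Lemma policy_row_sqdist (R : realType) nS nA (pi pi' : 'M[R]_(nS, nA)) s :
  policies pi -> policies pi' -> \sum_a (pi' s a - pi s a) ^+ 2 <= 2.
Proof.
move=> pol pol'; have [pi_ge0 pi_sum1] := pol; have [pi'_ge0 pi'_sum1] := pol'.
apply: (@le_trans _ _ (\sum_a (pi' s a + pi s a))); last by rewrite big_split /= pi_sum1 pi'_sum1.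
apply: ler_sum => a _.
have := pi_ge0 s a; have := pi'_ge0 s a.
have := policy_le1 s a pol; have := policy_le1 s a pol'.
by move: (pi s a) (pi' s a) => u v; nra.
Qed.

Lemma geometric_partial_sum_le (R : realType) (g : R) n :
  0 <= g < 1 -> \sum_(0 <= t < n) g ^+ t <= (1 - g)^-1.
Proof.
move=> /andP[g0 g1].
have telescope k : \sum_(0 <= t < k) g ^+ t * (1 - g) = 1 - g ^+ k.
  elim: k => [|k IH]; first by rewrite big_geq // expr0 subrr.
  by rewrite big_nat_recr //= IH exprS; ring.
rewrite -(ler_pM2r (_ : 0 < 1 - g)) ?subr_gt0 // mulVf ?gt_eqF ?subr_gt0 //.
by rewrite mulr_suml telescope lerBlDr lerDl exprn_ge0.
Qed.

Lemma rseries_cvg (R : realType) (u : nat -> R) (g : R) : 0 <= g < 1 ->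
  (forall t, 0 <= u t <= g ^+ t) ->
  (\sum_(0 <= t < n) u t) @[n --> \oo] --> rseries u.
Proof.
move=> g01 u_bnd; apply: nondecreasing_is_cvgn.
  move=> n k nk; rewrite (big_cat_nat (leq0n n) nk) /= lerDl.
  by apply: sumr_ge0 => t _; case/andP: (u_bnd t).
exists (1 - g)^-1 => _ [n _ <-]; apply: le_trans (geometric_partial_sum_le n g01).
by apply: ler_sum => t _; case/andP: (u_bnd t).
Qed.

Lemma rseries_ge_head (R : realType) (u : nat -> R) (g : R) : 0 <= g < 1 ->
  (forall t, 0 <= u t <= g ^+ t) -> u 0%N <= rseries u.
Proof.
move=> g01 u_bnd; apply: limr_ge; first exact: (rseries_cvg g01 u_bnd).
exists 1%N => // n /= n1.
rewrite (big_cat_nat (leq0n 1) n1) /= big_nat1 lerDl.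
by apply: sumr_ge0 => t _; case/andP: (u_bnd t).
Qed.

Section OccupancyMeasure.
Variables (R : realType) (nS nA : nat).
Variables (P : 'I_nA -> 'M[R]_nS) (xi : 'rV[R]_nS) (gamma : R).
Hypothesis P_ge0 : forall a s s', 0 <= P a s s'.
Hypothesis P_sum1 : forall a s, \sum_s' P a s s' = 1.
Hypothesis xi_gt0 : forall s, 0 < xi 0 s.
Hypothesis xi_sum1 : \sum_s xi 0 s = 1.
Hypothesis gamma01 : 0 < gamma < 1.

Let gamma_ge0 : 0 <= gamma. Proof. by case/andP: gamma01 => /ltW. Qed.
Let gamma01w : 0 <= gamma < 1. Proof. by rewrite gamma_ge0; case/andP: gamma01. Qed.

Lemma transition_mass (pi : 'M[R]_(nS, nA)) (c : 'I_nS -> R) : policies pi ->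
  \sum_s' \sum_s \sum_a c s * pi s a * P a s s' = \sum_s c s.
Proof.
case=> _ pi_sum1; rewrite exchange_big /=; apply: eq_bigr => s _.
rewrite exchange_big /= -[RHS]mulr1 -(pi_sum1 s) mulr_sumr; apply: eq_bigr => a _.
by rewrite -mulr_sumr P_sum1 mulr1.
Qed.

Lemma state_dist_distr (pi : 'M[R]_(nS, nA)) t : policies pi ->
  (forall s, 0 <= state_dist P xi pi t 0 s) /\ \sum_s state_dist P xi pi t 0 s = 1.
Proof.
move=> pol; have [pi_ge0 _] := pol; elim: t => [|t [sd_ge0 sd_sum1]] /=.
  by split => // s; exact: ltW.
split.
  move=> s'; rewrite mxE; apply: sumr_ge0 => s _; apply: sumr_ge0 => a _.
  by rewrite !mulr_ge0.
by under eq_bigr do rewrite mxE; rewrite transition_mass.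
Qed.

Definition state_occ (pi : 'M[R]_(nS, nA)) (s : 'I_nS) : R :=
  rseries (fun t => gamma ^+ t * state_dist P xi pi t 0 s).

Lemma discounted_dist_bound (pi : 'M[R]_(nS, nA)) s t : policies pi ->
  0 <= gamma ^+ t * state_dist P xi pi t 0 s <= gamma ^+ t.
Proof.
move=> pol; have [sd_ge0 sd_sum1] := state_dist_distr t pol.
have gt_ge0 : 0 <= gamma ^+ t by rewrite exprn_ge0.
rewrite mulr_ge0 ?sd_ge0 //= -[X in _ <= X]mulr1 ler_wpM2l //.
by rewrite -sd_sum1 (bigD1 s) //= lerDl; apply: sumr_ge0 => *; exact: sd_ge0.
Qed.

Lemma state_occ_cvg (pi : 'M[R]_(nS, nA)) s : policies pi ->
  (\sum_(0 <= t < n) gamma ^+ t * state_dist P xi pi t 0 s) @[n --> \oo]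
    --> state_occ pi s.
Proof.
by move=> pol; apply: (rseries_cvg gamma01w) => t; exact: discounted_dist_bound.
Qed.

Lemma xi_le_state_occ (pi : 'M[R]_(nS, nA)) s : policies pi -> xi 0 s <= state_occ pi s.
Proof.
move=> pol; rewrite -[xi 0 s]mul1r -(expr0 gamma).
by apply: (rseries_ge_head gamma01w) => t; exact: discounted_dist_bound.
Qed.

Lemma state_occ_ge0 (pi : 'M[R]_(nS, nA)) s : policies pi -> 0 <= state_occ pi s.
Proof. by move=> pol; apply: le_trans (xi_le_state_occ s pol); exact: ltW. Qed.

Lemma occupancyE (pi : 'M[R]_(nS, nA)) s a : policies pi ->
  occupancy P xi gamma pi s a = state_occ pi s * pi s a.
Proof.
move=> pol; rewrite mxE /rseries; apply: (cvg_lim (@Rhausdorff R)).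
rewrite (_ : (fun n => \sum_(0 <= t < n) gamma ^+ t * (state_dist P xi pi t 0 s * pi s a))
  = (fun n => (\sum_(0 <= t < n) gamma ^+ t * state_dist P xi pi t 0 s) * pi s a)).
  exact: (cvgMr_tmp (b := pi s a) (state_occ_cvg (s := s) pol)).
by apply: funext => n; rewrite mulr_suml; apply: eq_bigr => t _; rewrite mulrA.
Qed.

Lemma discounted_partial_sumS (pi : 'M[R]_(nS, nA)) s' n :
  \sum_(0 <= t < n.+1) gamma ^+ t * state_dist P xi pi t 0 s' =
  xi 0 s' + gamma * \sum_s \sum_a
     (\sum_(0 <= t < n) gamma ^+ t * state_dist P xi pi t 0 s) * pi s a * P a s s'.
Proof.
rewrite big_nat_recl // expr0 mul1r /=; congr (_ + _).
transitivity (\sum_(0 <= t < n) \sum_s \sum_a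
    gamma * (gamma ^+ t * state_dist P xi pi t 0 s * pi s a * P a s s')).
  apply: eq_bigr => t _; rewrite mxE exprS -mulrA !mulr_sumr.
  by apply: eq_bigr => s _; rewrite !mulr_sumr; apply: eq_bigr => a _; ring.
rewrite mulr_sumr exchange_big /=; apply: eq_bigr => s _.
rewrite mulr_sumr exchange_big /=; apply: eq_bigr => a _.
by rewrite !mulr_suml mulr_sumr; apply: eq_bigr => t _; ring.
Qed.

Lemma state_occ_bellman (pi : 'M[R]_(nS, nA)) s' : policies pi ->
  state_occ pi s' = xi 0 s' + gamma * \sum_s \sum_a state_occ pi s * pi s a * P a s s'.
Proof.
move=> pol.
have lim_occ : (\sum_(0 <= t < n.+1) gamma ^+ t * state_dist P xi pi t 0 s')
    @[n --> \oo] --> state_occ pi s'.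
  by have := state_occ_cvg (s := s') pol; rewrite -cvg_shiftS.
have lim_flow : (\sum_(0 <= t < n.+1) gamma ^+ t * state_dist P xi pi t 0 s')
    @[n --> \oo] --> xi 0 s' + gamma * \sum_s \sum_a state_occ pi s * pi s a * P a s s'.
  under eq_fun do rewrite discounted_partial_sumS.
  apply: cvgD; first exact: cvg_cst.
  apply: cvgMl_tmp; apply: cvg_big => [|s _]; first exact: add_continuous.
  apply: cvg_big => [|a _]; first exact: add_continuous.
  by apply: cvgMr_tmp; apply: cvgMr_tmp; exact: state_occ_cvg.
exact: (cvg_unique (@Rhausdorff R) lim_occ lim_flow).
Qed.

(* The Bellman flow equation has a unique solution: the map
   nu |-> xi + gamma P_pi^T nu is a gamma-contraction in l1. *)
Lemma bellman_unique (pi : 'M[R]_(nS, nA)) (nu : 'I_nS -> R) : policies pi ->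
  (forall s', nu s' = xi 0 s' + gamma * \sum_s \sum_a nu s * pi s a * P a s s') ->
  forall s, nu s = state_occ pi s.
Proof.
move=> pol nu_flow; have [pi_ge0 _] := pol.
pose e s := nu s - state_occ pi s.
have e_flow s' : e s' = gamma * \sum_s \sum_a e s * pi s a * P a s s'.
  have -> : \sum_s \sum_a e s * pi s a * P a s s' =
      \sum_s \sum_a nu s * pi s a * P a s s'
      - \sum_s \sum_a state_occ pi s * pi s a * P a s s'.
    rewrite -sumrB; apply: eq_bigr => s _.
    by rewrite -sumrB; apply: eq_bigr => a _; rewrite /e; ring.
  by rewrite /e {1}nu_flow {1}state_occ_bellman //; ring.
have contraction : \sum_s' `|e s'| <= gamma * \sum_s `|e s|.
  rewrite -[X in _ <= _ * X](transition_mass (fun s => `|e s|) pol) mulr_sumr.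
  apply: ler_sum => s' _; rewrite e_flow normrM ger0_norm //.
  apply: ler_wpM2l => //; apply: (le_trans (ler_norm_sum _ _ _)); apply: ler_sum => s _.
  apply: (le_trans (ler_norm_sum _ _ _)); apply: ler_sum => a _.
  by rewrite !normrM (ger0_norm (pi_ge0 s a)) (ger0_norm (P_ge0 a s s')).
have l1_le0 : \sum_s `|e s| <= 0.
  have : 0 <= \sum_s `|e s| by apply: sumr_ge0 => s _; exact: normr_ge0.
  by case/andP: gamma01 => _ g1; nra.
move=> s; apply/eqP; rewrite -subr_eq0 -normr_le0 -/(e s).
apply: le_trans l1_le0; rewrite (bigD1 s) //= lerDl.
by apply: sumr_ge0 => *; exact: normr_ge0.
Qed.

Lemma occupancy_in_polytope (pi : 'M[R]_(nS, nA)) : policies pi ->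
  occ_polytope P xi gamma (occupancy P xi gamma pi).
Proof.
move=> pol; have [pi_ge0 pi_sum1] := pol; split.
  by move=> s a; rewrite occupancyE // mulr_ge0 ?state_occ_ge0.
move=> s'; rewrite sumrB.
under eq_bigr do rewrite occupancyE //.
rewrite -mulr_sumr pi_sum1 mulr1 (state_occ_bellman s' pol) -mulr_sumr.
suff -> : \sum_a \sum_s P a s s' * occupancy P xi gamma pi s a =
    \sum_s \sum_a state_occ pi s * pi s a * P a s s' by rewrite addrK.
rewrite exchange_big /=; apply: eq_bigr => s _; apply: eq_bigr => a _.
by rewrite occupancyE // mulrC.
Qed.

Lemma state_occ_le_mismatch (pi : 'M[R]_(nS, nA)) s :
  state_occ pi s <=
    sup_norm (fun s => dvisit P xi gamma pi s / xi 0 s) / (1 - gamma) * xi 0 s.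
Proof.
have g1 : 0 < 1 - gamma by rewrite subr_gt0; case/andP: gamma01.
have ratio : dvisit P xi gamma pi s / xi 0 s <=
    sup_norm (fun s => dvisit P xi gamma pi s / xi 0 s).
  exact: le_trans (ler_norm _) (le_bigmax 0 (fun i => `|dvisit P xi gamma pi i / xi 0 i|) s).
move: ratio; rewrite ler_pdivrMr // mulrAC ler_pdivlMr // mulrC.
by rewrite [_ * (1 - gamma)]mulrC.
Qed.

Definition mixture_weight (pi pi' : 'M[R]_(nS, nA)) (al : R) (s : 'I_nS) : R :=
  al * state_occ pi' s + (1 - al) * state_occ pi s.

(* The policy realizing that mixture: conditioning the mixed occupancy on s. *)
Definition mixture_policy (pi pi' : 'M[R]_(nS, nA)) (al : R) : 'M[R]_(nS, nA) :=
  \matrix_(s, a) ((al * state_occ pi' s * pi' s a + (1 - al) * state_occ pi s * pi s a)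
                  / mixture_weight pi pi' al s).

Section Mixture.
Variables (pi pi' : 'M[R]_(nS, nA)) (al : R).
Hypotheses (pol : policies pi) (pol' : policies pi') (al01 : 0 <= al <= 1).

Local Notation w := (mixture_weight pi pi' al).
Local Notation mix := (mixture_policy pi pi' al).

Lemma xi_le_mixture_weight s : xi 0 s <= w s.
Proof.
have := xi_le_state_occ s pol; have := xi_le_state_occ s pol'.
by rewrite /mixture_weight; case/andP: al01; nra.
Qed.

Let w_gt0 s : 0 < w s.
Proof. exact: lt_le_trans (xi_gt0 s) (xi_le_mixture_weight s). Qed.

Lemma mixture_weightM s a :
  w s * mix s a = al * state_occ pi' s * pi' s a + (1 - al) * state_occ pi s * pi s a.
Proof. by rewrite mxE mulrC divfK // gt_eqF. Qed.

Lemma mixture_policy_policies : policies mix.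
Proof.
have [pi_ge0 pi_sum1] := pol; have [pi'_ge0 pi'_sum1] := pol'.
have [al0 al1] : 0 <= al /\ 0 <= 1 - al by case/andP: al01; rewrite subr_ge0.
split=> [s a|s].
  rewrite mxE divr_ge0 ?(ltW (w_gt0 s)) // addr_ge0 // !mulr_ge0 //;
    exact: state_occ_ge0.
apply: (@mulfI _ (w s)); first by rewrite gt_eqF.
rewrite mulr1 mulr_sumr; under eq_bigr do rewrite mixture_weightM.
by rewrite big_split /= -!mulr_sumr pi_sum1 pi'_sum1 !mulr1.
Qed.

(* The state occupancy of the mixture policy is the mixture weight, since the
   weight solves the Bellman flow equation of the mixture policy. *)
Lemma state_occ_mixture s : state_occ mix s = w s.
Proof.
symmetry; apply: bellman_unique mixture_policy_policies _ s => s'.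
under eq_bigr do under eq_bigr do rewrite mixture_weightM.
rewrite /mixture_weight (state_occ_bellman s' pol) (state_occ_bellman s' pol').
have -> : \sum_s \sum_a (al * state_occ pi' s * pi' s a
                        + (1 - al) * state_occ pi s * pi s a) * P a s s' =
    al * (\sum_s \sum_a state_occ pi' s * pi' s a * P a s s')
    + (1 - al) * \sum_s \sum_a state_occ pi s * pi s a * P a s s'.
  rewrite !mulr_sumr -big_split /=; apply: eq_bigr => s _.
  by rewrite !mulr_sumr -big_split /=; apply: eq_bigr => a _; ring.
ring.
Qed.

Lemma occupancy_mixture :
  occupancy P xi gamma mix = al *: occupancy P xi gamma pi' + (1 - al) *: occupancy P xi gamma pi.
Proof.
apply/matrixP => s a.
have -> : (al *: occupancy P xi gamma pi' + (1 - al) *: occupancy P xi gamma pi) s a =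
    al * occupancy P xi gamma pi' s a + (1 - al) * occupancy P xi gamma pi s a.
  by rewrite !mxE.
rewrite (occupancyE _ _ mixture_policy_policies) !occupancyE //.
rewrite state_occ_mixture mixture_weightM.
ring.
Qed.

Lemma mixture_sqdist (Mb : R) : (forall s, state_occ pi' s <= Mb * xi 0 s) ->
  sqn (mix - pi) <= nS%:R * 2 * (al * Mb) ^+ 2.
Proof.
move=> occ_le; have [al0 _] := andP al01.
have row_diff s a : (mix - pi) s a = (al * state_occ pi' s / w s) * (pi' s a - pi s a).
  apply: (@mulfI _ (w s)); first by rewrite gt_eqF.
  have -> : (mix - pi) s a = mix s a - pi s a by rewrite !mxE.
  rewrite mulrBr mixture_weightM mulrA mulrCA divff ?gt_eqF // mulr1.
  by rewrite /mixture_weight; ring.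
have coef_le s : (al * state_occ pi' s / w s) ^+ 2 <= (al * Mb) ^+ 2.
  have Mb0 : 0 <= Mb.
    by have := le_trans (state_occ_ge0 s pol') (occ_le s); rewrite pmulr_lge0.
  rewrite ler_pXn2r ?nnegrE ?mulr_ge0 ?divr_ge0 ?invr_ge0 ?state_occ_ge0 ?(ltW (w_gt0 s)) //.
  rewrite -mulrA ler_wpM2l // ler_pdivrMr //; apply: (le_trans (occ_le s)).
  by rewrite ler_wpM2l // xi_le_mixture_weight.
rewrite /sqn /ip.
apply: (@le_trans _ _ (\sum_(s < nS) 2 * (al * Mb) ^+ 2)); last first.
  by rewrite sumr_const card_ord -[_ *+ nS]mulr_natl mulrA.
apply: ler_sum => s _.
apply: (@le_trans _ _ (\sum_a (al * Mb) ^+ 2 * (pi' s a - pi s a) ^+ 2)).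
  apply: ler_sum => a _; rewrite row_diff -expr2 exprMn.
  by apply: ler_wpM2r; [exact: sqr_ge0 | exact: coef_le].
by rewrite -mulr_sumr mulrC ler_wpM2r ?sqr_ge0 ?policy_row_sqdist.
Qed.

End Mixture.

End OccupancyMeasure.

(* A gap sequence with d_{k+1} <= (1 - al) d_k + K al^2 for every al in [0,1]
   decays like 4K/(k+1): take al = 1 at k = 0 and al = 2/(k+2) afterwards. *)
Lemma gap_recursion_rate (R : realType) (d : nat -> R) (K : R) : 0 <= K ->
  (forall k (al : R), 0 <= al <= 1 -> d k.+1 <= (1 - al) * d k + K * al ^+ 2) ->
  forall k, (1 <= k)%N -> d k <= 4 * K / k.+1%:R.
Proof.
move=> K0 step; elim=> [//|k IH] _.
case: k IH => [_|k IH].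
  have := step 0%N 1; rewrite lexx ler01 subrr mul0r add0r expr1n mulr1 => /(_ isT) d1.
  by apply: (le_trans d1); rewrite ler_pdivlMr ?ltr0n //; lra.
have {IH} := IH isT.
have -> : (k.+2%:R : R) = k.+1%:R + 1 by rewrite -addn1 natrD.
have -> : (k.+3%:R : R) = k.+1%:R + 2 by rewrite -addn2 natrD.
have n1 : 1 <= (k.+1%:R : R) by rewrite ler1n.
move: (k.+1%:R : R) n1 => n n1 IH.
set u := (n + 1)^-1; set v := (n + 2)^-1.
have hu : u * (n + 1) = 1 by rewrite mulVf // gt_eqF //; lra.
have hv : v * (n + 2) = 1 by rewrite mulVf // gt_eqF //; lra.
have v0 : 0 <= v by rewrite invr_ge0; lra.
have v12 : 2 * v <= 1 by nra.
have uv : u - v = u * v by nra.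
have vu : v <= u by nra.
have := step k.+1 (2 * v); rewrite v12 mulr_ge0 // => /(_ isT) dk2.
apply: (le_trans dk2).
have : (1 - 2 * v) * d k.+1 <= (1 - 2 * v) * (4 * K * u).
  by apply: ler_wpM2l; [lra | exact: IH].
have : 0 <= K * v * (u - v) by rewrite !mulr_ge0 // subr_ge0.
nra.
Qed.

Lemma rate_constant_le (R : realType) (L M gamma : R) (nS k : nat) :
  0 < L -> gamma < 1 ->
  4 * (2 * L * nS%:R * (M / (1 - gamma)) ^+ 2) / k.+1%:R
    <= 20 * L * nS%:R / ((1 - gamma) ^+ 2 * k.+1%:R) * M ^+ 2.
Proof.
move=> L_gt0 gamma1.
have g1 : 1 - gamma != 0 by rewrite subr_eq0 gt_eqF.
have k1 : (k.+1%:R : R) != 0 by rewrite pnatr_eq0.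
set c := L * nS%:R / ((1 - gamma) ^+ 2 * k.+1%:R) * M ^+ 2.
have c_ge0 : 0 <= c.
  apply: mulr_ge0; last exact: sqr_ge0.
  by apply: divr_ge0; apply: mulr_ge0; rewrite ?ler0n ?sqr_ge0 // ltW.
have -> : 4 * (2 * L * nS%:R * (M / (1 - gamma)) ^+ 2) / k.+1%:R = 8 * c.
  by rewrite /c; field; rewrite nat1r k1 g1.
have -> : 20 * L * nS%:R / ((1 - gamma) ^+ 2 * k.+1%:R) * M ^+ 2 = 20 * c.
  by rewrite /c; ring.
lra.
Qed.

Unset Implicit Arguments.

Theorem theorem5 (R : realType) (nS nA : nat)
  (P : 'I_nA -> 'M[R]_nS) (xi : 'rV[R]_nS) (gamma : R)
  (F : 'M[R]_(nS, nA) -> R^o) (L : R)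
  (pistar : 'M[R]_(nS, nA)) (pis : nat -> 'M[R]_(nS, nA)) :
  (* finite MDP *)
  (forall a s s', 0 <= P a s s') ->
  (forall a s, \sum_s' P a s s' = 1) ->
  (forall s, 0 < xi 0 s) -> \sum_s xi 0 s = 1 ->
  0 < gamma < 1 ->
  (* F concave on an open (convex) neighbourhood U of L *)
  (exists U : set 'M[R]_(nS, nA),
      open U /\ occ_polytope P xi gamma `<=` U /\
      (forall x y t, U x -> U y -> 0 <= t <= 1 -> U (t *: x + (1 - t) *: y)) /\
      (forall x y t, U x -> U y -> 0 <= t <= 1 ->
         t * F x + (1 - t) * F y <= F (t *: x + (1 - t) *: y))) ->
  (* R := F o Lambda is differentiable on Delta with L-Lipschitz gradient *)
  0 < L ->
  (forall pi, policies pi -> differentiable (fun p => F (occupancy P xi gamma p)) pi) ->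
  (forall pi pi', policies pi -> policies pi' ->
     frob_norm (grad (fun p => F (occupancy P xi gamma p)) pi
                - grad (fun p => F (occupancy P xi gamma p)) pi')
       <= L * frob_norm (pi - pi')) ->
  (* pistar is a global maximizer of R over Delta *)
  policies pistar ->
  (forall pi, policies pi ->
     F (occupancy P xi gamma pi) <= F (occupancy P xi gamma pistar)) ->
  (* projected gradient ascent iterates *)
  policies (pis 0%N) ->
  (forall k, policies (pis k.+1) /\
     forall y, policies y ->
       frob_norm (pis k.+1 - (pis k + L^-1 *:
                    grad (fun p => F (occupancy P xi gamma p)) (pis k)))
       <= frob_norm (y - (pis k + L^-1 *:
                    grad (fun p => F (occupancy P xi gamma p)) (pis k)))) ->
  forall k : nat, (1 <= k)%N ->
    F (occupancy P xi gamma pistar) - F (occupancy P xi gamma (pis k))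
      <= 20 * L * nS%:R / ((1 - gamma) ^+ 2 * (k.+1)%:R)
         * (sup_norm (fun s => dvisit P xi gamma pistar s / xi 0 s)) ^+ 2.
Proof.
move=> P_ge0 P_sum1 xi_gt0 xi_sum1 gamma01 [U [_ [polytope_sub_U [_ F_concave]]]]
  L_gt0 R_diff R_lip pol_star _ pol0 pga_step k k_ge1.
set Rf := fun p => F (occupancy P xi gamma p).
have pol_k j : policies (pis j) by case: j => [|j] //; case: (pga_step j).
set M := sup_norm _; set Mb := M / (1 - gamma).
have occ_star s : state_occ P xi gamma pistar s <= Mb * xi 0 s.
  exact: state_occ_le_mismatch.
set K := 2 * L * nS%:R * Mb ^+ 2.
have K_ge0 : 0 <= K by rewrite /K mulr_ge0 ?sqr_ge0 // !mulr_ge0 ?ler0n // ltW.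
have gap_step j al : 0 <= al <= 1 ->
    Rf pistar - Rf (pis j.+1) <= (1 - al) * (Rf pistar - Rf (pis j)) + K * al ^+ 2.
  move=> al01; set mix := mixture_policy P xi gamma (pis j) pistar al.
  have pol_mix : policies mix by apply: mixture_policy_policies.
  have concave : al * Rf pistar + (1 - al) * Rf (pis j) <= Rf mix.
    rewrite /Rf occupancy_mixture //; apply: F_concave => //;
      by apply: polytope_sub_U; apply: occupancy_in_polytope.
  have ascent : Rf mix <= Rf (pis j.+1) + L * sqn (mix - pis j).
    apply: (projected_ascent_step (@policies_segment R nS nA) L_gt0 R_diff R_lip) => //.
    exact: (proj2 (pga_step j)).
  have close : sqn (mix - pis j) <= nS%:R * 2 * (al * Mb) ^+ 2.
    exact: mixture_sqdist.
  have := ler_wpM2l (ltW L_gt0) close.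
  by rewrite /K; nra.
apply: le_trans (gap_recursion_rate K_ge0 gap_step k_ge1) _.
by apply: rate_constant_le; case/andP: gamma01.
Qed.
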